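(* Let $(\tilde S,\tilde f)$ and $(\tilde T,\tilde g)$ be lifted partial permutations with corresponding Heegaard states $\mathbf x$ and $\mathbf y$, and suppose there is $\phi\in D(\mathbf x,\mathbf y)$. Then for each $i=1,\dots,m$, the local multiplicity of $\phi$ at $O_i$ equals $w_i(\tilde f)-w_i(\tilde g)$.
   Context: Fix integers $0<k<m$. $G_m$ is the group of isometries of $\mathbb R$ generated by $x\mapsto 1-x$ and $x\mapsto 2m-1-x$; $Q_1:\mathbb Z\to\mathbb Z/G_m\cong\{1,\dots,m-1\}$; $Q_2:\frac12+\mathbb Z\to\{1,\dots,m\}$ sends $j-\frac12$ to the unique $i\in\{1,\dots,m\}$ with $i\equiv j$ or $i\equiv 2-j\pmod{2m-2}$. A lifted partial permutation on $k$ letters is a pair $(\tilde S,\tilde f)$ with $\tilde S\subset\mathbb Z$ $G_m$-invariant, $|\tilde S/G_m|=k$, $\tilde f:\tilde S\to\mathbb Z$ $G_m$-equivariant with injective induced map $\tilde S/G_m\to\mathbb Z/G_m$. Weight: $w_j(\tilde f)=\tfrac12\#\{i\in\tilde S: i<j-\tfrac12<\tilde f(i)\text{ or } i>j-\tfrac12>\tilde f(i)\}$. In $\mathbb R^2$ take vertical lines $\tilde\alpha_i=\{i\}\times\mathbb R$, horizontal lines $\tilde\beta_i=\mathbb R\times\{i\}$, and punctures at $(\frac12+i,\frac12+i)$ labeled $O_{Q_2(\frac12+i)}$; $\mathbb G_m$ is generated by the $180^\circ$ rotations about $(\frac12,\frac12)$ and $(m-\frac12,m-\frac12)$; $\mathcal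 H=\mathbb R^2/\mathbb G_m$ with marked points $O_1,\dots,O_m$ ($O_1,O_m$ the orbifold points), and $\alpha_i,\beta_i$ the images of $\tilde\alpha_j,\tilde\beta_j$ with $Q_1(j)=i$. Heegaard states: $k$ points on $\alpha_i\cap\beta_j$'s using distinct $\alpha$'s and $\beta$'s; $(\tilde S,\tilde f)$ corresponds to the image of its graph. Two-chains assign integers to components of $\mathcal H\setminus(\boldsymbol\alpha\cup\boldsymbol\beta)$; $D(\mathbf x,\mathbf y)$ is the set of two-chains with initial corners exactly at $\mathbf x\setminus\mathbf y$ and terminal corners exactly at $\mathbf y\setminus\mathbf x$ (a point with quadrant multiplicities $A,B,C,D$, $A,D$ opposite, is initial if $B+C=A+D+1$, terminal if $B+C=A+D-1$, non-corner if $A+D=B+C$). The local multiplicity at $O_i$ is the multiplicity of the region containing $O_i$. *)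

From Stdlib Require Import ZArith List Relations.
Import ListNotations.
Open Scope Z_scope.

Definition Ggen (m : Z) (x y : Z) : Prop := y = 1 - x \/ y = 2 * m - 1 - x.
Definition Gequiv (m : Z) : Z -> Z -> Prop := clos_refl_sym_trans Z (Ggen m).

(* S is G_m-invariant (the generators are involutions). *)
Definition Ginvariant (m : Z) (S : Z -> Prop) : Prop :=
  forall s, S s -> S (1 - s) /\ S (2 * m - 1 - s).

(* f : S -> Z is G_m-equivariant (values of f outside S are irrelevant). *)
Definition Gequivariant (m : Z) (S : Z -> Prop) (f : Z -> Z) : Prop :=
  forall s, S s -> f (1 - s) = 1 - f s /\ f (2 * m - 1 - s) = 2 * m - 1 - f s.

(* |S / G_m| = k : there is a system of exactly k pairwise inequivalent
   orbit representatives in S covering S. *)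
Definition num_orbits (m : Z) (S : Z -> Prop) (k : Z) : Prop :=
  exists l : list Z,
    NoDup l /\ Z.of_nat (length l) = k /\
    (forall r, In r l -> S r) /\
    (forall r1 r2, In r1 l -> In r2 l -> Gequiv m r1 r2 -> r1 = r2) /\
    (forall s, S s -> exists r, In r l /\ Gequiv m s r).

Definition induced_injective (m : Z) (S : Z -> Prop) (f : Z -> Z) : Prop :=
  forall s t, S s -> S t -> Gequiv m (f s) (f t) -> Gequiv m s t.

Definition lifted_pp (m k : Z) (S : Z -> Prop) (f : Z -> Z) : Prop :=
  Ginvariant m S /\ num_orbits m S k /\ Gequivariant m S f /\
  induced_injective m S f.

(* s contributes to w_j(f): s < j - 1/2 < f s  or  s > j - 1/2 > f s
   (for integers, s < j - 1/2 <-> s <= j - 1, and j - 1/2 < t <-> j <= t). *)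
Definition crossing (S : Z -> Prop) (f : Z -> Z) (j : Z) (s : Z) : Prop :=
  S s /\ ((s <= j - 1 /\ j <= f s) \/ (j <= s /\ f s <= j - 1)).

Definition card_is (P : Z -> Prop) (n : nat) : Prop :=
  exists l : list Z, NoDup l /\ length l = n /\ (forall s, In s l <-> P s).

(* The lines alpha~, beta~ are all integer vertical / horizontal lines, so the
   components of R^2 minus them are the open unit squares; the square
   (a,b)-th is (a,a+1) x (b,b+1), indexed by its lower-left corner. *)
(* 180-degree rotation about (1/2,1/2) acting on squares *)
Definition rot1 (sq : Z * Z) : Z * Z := (- fst sq, - snd sq).
(* 180-degree rotation about (m-1/2,m-1/2) acting on squares *)
Definition rot2 (m : Z) (sq : Z * Z) : Z * Z :=
  (2 * m - 2 - fst sq, 2 * m - 2 - snd sq).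
Definition SqGen (m : Z) (sq1 sq2 : Z * Z) : Prop :=
  sq2 = rot1 sq1 \/ sq2 = rot2 m sq1.
(* two squares project to the same region of H \ (alpha u beta) *)
Definition SqEquiv (m : Z) : Z * Z -> Z * Z -> Prop :=
  clos_refl_sym_trans (Z * Z) (SqGen m).

(* A two-chain on H (a finite integer combination of the components of
   H \ (alpha u beta)), represented by its G_m-invariant lift to the squares:
   invariant, and nonzero on only finitely many regions. *)
Definition two_chain (m : Z) (phi : Z * Z -> Z) : Prop :=
  (forall sq, phi (rot1 sq) = phi sq /\ phi (rot2 m sq) = phi sq) /\
  (exists L : list (Z * Z),
      forall sq, phi sq <> 0 -> exists r, In r L /\ SqEquiv m sq r).

(* Quadrant multiplicities at the lattice point (p,q) = alpha~_p cap beta~_q: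
   A = lower-left, D = upper-right (opposite), B = lower-right, C = upper-left. *)
Definition qA (phi : Z * Z -> Z) (p q : Z) : Z := phi (p - 1, q - 1).
Definition qD (phi : Z * Z -> Z) (p q : Z) : Z := phi (p, q).
Definition qB (phi : Z * Z -> Z) (p q : Z) : Z := phi (p, q - 1).
Definition qC (phi : Z * Z -> Z) (p q : Z) : Z := phi (p - 1, q).

Definition initial_at phi p q : Prop :=
  qB phi p q + qC phi p q = qA phi p q + qD phi p q + 1.
Definition terminal_at phi p q : Prop :=
  qB phi p q + qC phi p q = qA phi p q + qD phi p q - 1.
Definition noncorner_at phi p q : Prop :=
  qA phi p q + qD phi p q = qB phi p q + qC phi p q.

(* the lift of the Heegaard state of (S,f): the graph of f *)
Definition graph (S : Z -> Prop) (f : Z -> Z) (p q : Z) : Prop := S p /\ f p = q.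

Definition in_D (m : Z) (S : Z -> Prop) (f : Z -> Z) (T : Z -> Prop) (g : Z -> Z)
    (phi : Z * Z -> Z) : Prop :=
  two_chain m phi /\
  forall p q,
    (graph S f p q /\ ~ graph T g p q -> initial_at phi p q) /\
    (graph T g p q /\ ~ graph S f p q -> terminal_at phi p q) /\
    (~ (graph S f p q /\ ~ graph T g p q) ->
     ~ (graph T g p q /\ ~ graph S f p q) -> noncorner_at phi p q).

(* Q_2 : (1/2 + Z) -> {1..m}; the half-integer j - 1/2 is represented by j. *)
Definition Q2rel (m j i : Z) : Prop :=
  1 <= i <= m /\
  ((i - j) mod (2 * m - 2) = 0 \/ (i - (2 - j)) mod (2 * m - 2) = 0).
(* The puncture (1/2+j, 1/2+j) lies in square (j,j) and is labeled
   O_{Q_2(1/2+j)} = O_i with Q2rel m (j+1) i. *)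

(* Lift everything to the plane: the regions are the unit squares (a,b), a
   two-chain phi is a function on squares, and the two Heegaard states are
   the graphs of f and g.  The corner conditions of phi in D(x,y) say exactly
   that the mixed second difference of phi at a lattice point (p,q) is
   [ (p,q) in graph g ] - [ (p,q) in graph f ].  Summing over a rectangle,
   this difference telescopes to the alternating sum of phi at the four
   corner squares of the rectangle.

   The crossings contributing to w_i(f) are the graph points in two
   quadrants around the square (i-1,i-1): the upper-left quadrant
   (s <= i-1 < i <= f s) and the lower-right one (f s <= i-1 < i <= s).
   Since f moves points by a bounded amount and phi vanishes far from the
   diagonal, both quadrants can be replaced by large finite squares whose
   only non-vanishing corner is (i-1,i-1); this gives
   #crossings(f) - #crossings(g) = 2 phi(i-1,i-1).  Finally phi is invariant
   under the rotations, hence constant on the diagonal squares (j,j) whose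
   puncture carries the label O_i. *)

From Stdlib Require Import ZArith List Relations Lia ClassicalEpsilon.
Open Scope Z_scope.

Fixpoint sumN (F : Z -> Z) (c : Z) (n : nat) : Z :=
  match n with O => 0 | S n' => sumN F c n' + F (c + Z.of_nat n') end.

Lemma sumN_ext F H c c' n : c = c' ->
  (forall x, c <= x < c + Z.of_nat n -> F x = H x) -> sumN F c n = sumN H c' n.
Proof.
  intros <-. induction n; cbn [sumN]; intros E; auto.
  f_equal; [apply IHn; intros; apply E; lia | apply E; lia].
Qed.

Lemma sumN_sub F H c n :
  sumN (fun x => F x - H x) c n = sumN F c n - sumN H c n.
Proof. induction n; cbn [sumN]; [reflexivity | rewrite IHn; lia]. Qed.

Lemma sumN_split F c n1 n2 :
  sumN F c (n1 + n2) = sumN F c n1 + sumN F (c + Z.of_nat n1) n2.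
Proof.
  induction n2; cbn [sumN].
  - rewrite Nat.add_0_r; lia.
  - rewrite Nat.add_succ_r; cbn [sumN]; rewrite IHn2.
    replace (c + Z.of_nat (n1 + n2)) with (c + Z.of_nat n1 + Z.of_nat n2) by lia.
    lia.
Qed.

Lemma sumN_telescope F c n :
  sumN (fun x => F x - F (x - 1)) (c + 1) n = F (c + Z.of_nat n) - F c.
Proof.
  induction n; cbn [sumN].
  - rewrite Z.add_0_r; lia.
  - rewrite IHn.
    replace (c + 1 + Z.of_nat n - 1) with (c + Z.of_nat n) by lia.
    replace (c + Z.of_nat (S n)) with (c + 1 + Z.of_nat n) by lia.
    lia.
Qed.

Definition ind (P : Prop) : Z := if excluded_middle_informative P then 1 else 0.

Lemma ind_iff P Q : (P <-> Q) -> ind P = ind Q.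
Proof.
  unfold ind; intros E.
  destruct (excluded_middle_informative P), (excluded_middle_informative Q); tauto.
Qed.

Lemma sumN_ind_point (P : Prop) (x c : Z) n :
  sumN (fun q => ind (P /\ x = q)) c n = ind (P /\ c <= x < c + Z.of_nat n).
Proof.
  induction n; cbn [sumN].
  - unfold ind; destruct (excluded_middle_informative _); lia.
  - rewrite IHn; unfold ind.
    destruct (excluded_middle_informative (P /\ c <= x < c + Z.of_nat n)),
      (excluded_middle_informative (P /\ x = c + Z.of_nat n)),
      (excluded_middle_informative (P /\ c <= x < c + Z.of_nat (S n)));
      try lia; exfalso; intuition lia.
Qed.

Lemma count_in_window (P : Z -> Prop) c n : exists l, NoDup l /\
  Z.of_nat (length l) = sumN (fun s => ind (P s)) c n /\
  forall s, In s l <-> P s /\ c <= s < c + Z.of_nat n.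
Proof.
  induction n as [|n [l [Hnd [Hlen Hin]]]]; cbn [sumN].
  - exists nil; repeat split; simpl; try constructor; intros; try tauto; lia.
  - set (x := c + Z.of_nat n).
    unfold ind at 2; destruct (excluded_middle_informative (P x)) as [Hp|Hp].
    + exists (x :: l); split; [|split; [|intros s; split]].
      * constructor; auto. intros Hc; apply Hin in Hc; unfold x in Hc; lia.
      * simpl length; rewrite Nat2Z.inj_succ, Hlen; lia.
      * intros [<-|Hs]; [split; auto; unfold x; lia|].
        apply Hin in Hs; split; [tauto | lia].
      * intros [Hs Hr]; destruct (Z.eq_dec s x) as [->|Hne]; [left; auto|].
        right; apply Hin; split; auto; unfold x in Hne; lia.
    + exists l; split; [|split; [|intros s; split]]; auto.
      * lia.
      * intros Hs; apply Hin in Hs; split; [tauto | lia].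
      * intros [Hs Hr]; destruct (Z.eq_dec s x) as [->|Hne]; [tauto|].
        apply Hin; split; auto; unfold x in Hne; lia.
Qed.

(* [boxsum F a0 n1 b0 n2] sums F p q over the rectangle
   a0 < p <= a0 + n1, b0 < q <= b0 + n2 of lattice points. *)
Definition boxsum (F : Z -> Z -> Z) (a0 : Z) (n1 : nat) (b0 : Z) (n2 : nat) : Z :=
  sumN (fun p => sumN (fun q => F p q) (b0 + 1) n2) (a0 + 1) n1.

Lemma boxsum_graph (S : Z -> Prop) f a0 n1 b0 n2 :
  boxsum (fun p q => ind (graph S f p q)) a0 n1 b0 n2 =
  sumN (fun p => ind (S p /\ b0 + 1 <= f p < b0 + 1 + Z.of_nat n2)) (a0 + 1) n1.
Proof.
  unfold boxsum, graph; apply sumN_ext; auto.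
  intros x _; apply sumN_ind_point.
Qed.

Lemma boxsum_mixed_difference (phi : Z * Z -> Z) a0 n1 b0 n2 :
  boxsum (fun p q => phi (p, q) - phi (p - 1, q) - phi (p, q - 1) + phi (p - 1, q - 1))
    a0 n1 b0 n2 =
  phi (a0 + Z.of_nat n1, b0 + Z.of_nat n2) - phi (a0, b0 + Z.of_nat n2)
  - phi (a0 + Z.of_nat n1, b0) + phi (a0, b0).
Proof.
  unfold boxsum; set (B := b0 + Z.of_nat n2).
  set (column := fun p => phi (p, B) - phi (p, b0)).
  rewrite (sumN_ext _ (fun p => column p - column (p - 1)) _ _ n1 eq_refl).
  - rewrite sumN_telescope; unfold column; lia.
  - intros p _; set (row := fun q => phi (p, q) - phi (p - 1, q)).
    rewrite (sumN_ext _ (fun q => row q - row (q - 1)) _ _ n2 eq_refl).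
    + rewrite sumN_telescope; unfold row, column, B; lia.
    + intros; unfold row; lia.
Qed.

Lemma in_D_mixed_difference m S f T g phi : in_D m S f T g phi -> forall p q,
  ind (graph T g p q) - ind (graph S f p q) =
  phi (p, q) - phi (p - 1, q) - phi (p, q - 1) + phi (p - 1, q - 1).
Proof.
  intros [_ HD] p q; destruct (HD p q) as (Hinit & Hterm & Hnone).
  unfold initial_at, terminal_at, noncorner_at, qA, qB, qC, qD, ind in *.
  destruct (excluded_middle_informative (graph T g p q)),
    (excluded_middle_informative (graph S f p q)).
  - specialize (Hnone ltac:(tauto) ltac:(tauto)); lia.
  - specialize (Hterm ltac:(tauto)); lia.
  - specialize (Hinit ltac:(tauto)); lia.
  - specialize (Hnone ltac:(tauto) ltac:(tauto)); lia.
Qed.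

Lemma in_D_boxsum m S f T g phi : in_D m S f T g phi -> forall a0 n1 b0 n2,
  boxsum (fun p q => ind (graph T g p q)) a0 n1 b0 n2 -
  boxsum (fun p q => ind (graph S f p q)) a0 n1 b0 n2 =
  phi (a0 + Z.of_nat n1, b0 + Z.of_nat n2) - phi (a0, b0 + Z.of_nat n2)
  - phi (a0 + Z.of_nat n1, b0) + phi (a0, b0).
Proof.
  intros HD a0 n1 b0 n2; rewrite <- boxsum_mixed_difference; unfold boxsum.
  rewrite <- sumN_sub; apply sumN_ext; auto; intros p _.
  rewrite <- sumN_sub; apply sumN_ext; auto; intros q _.
  apply (in_D_mixed_difference m S f T g phi HD).
Qed.

Lemma list_bound {A} (F : A -> Z) (l : list A) :
  exists K, 0 <= K /\ forall x, In x l -> F x <= K.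
Proof.
  induction l as [|a l [K [HK0 HK]]].
  - exists 0; split; [lia | intros x []].
  - exists (Z.max K (F a)); split; [lia|].
    intros x [<-|Hx]; [lia | specialize (HK x Hx); lia].
Qed.

Lemma SqEquiv_diag_distance m x y : SqEquiv m x y ->
  Z.abs (fst x - snd x) = Z.abs (fst y - snd y).
Proof.
  induction 1 as [x y [-> | ->]| | |]; try congruence.
  all: destruct x; unfold rot1, rot2; simpl; lia.
Qed.

(* A two-chain is supported in a band around the diagonal: it is nonzero on
   finitely many regions, each of which lies at a fixed distance from it. *)
Lemma two_chain_band m (phi : Z * Z -> Z) : two_chain m phi ->
  exists M, 0 <= M /\ forall a b, M < Z.abs (a - b) -> phi (a, b) = 0.
Proof.
  intros [_ [L HL]].
  destruct (list_bound (fun r : Z * Z => Z.abs (fst r - snd r)) L) as [M [HM0 HM]].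
  exists M; split; auto; intros a b Hab.
  destruct (Z.eq_dec (phi (a, b)) 0) as [|Hn]; auto.
  destruct (HL (a, b) Hn) as [r [Hr Heq]].
  apply SqEquiv_diag_distance in Heq; specialize (HM r Hr); simpl in *; lia.
Qed.

Section Displacement.
Variables (m : Z) (S : Z -> Prop) (f : Z -> Z).
Hypotheses (HS : Ginvariant m S) (Hf : Gequivariant m S f).

Lemma Ggen_displacement x y : Ggen m x y ->
  (S x <-> S y) /\ (S x -> Z.abs (f x - x) = Z.abs (f y - y)).
Proof.
  intros [-> | ->]; split.
  - split; [apply HS|]; intros Hy.
    replace x with (1 - (1 - x)) by lia; apply HS, Hy.
  - intros Hx; rewrite (proj1 (Hf x Hx)); lia.
  - split; [apply HS|]; intros Hy.
    replace x with (2 * m - 1 - (2 * m - 1 - x)) by lia; apply HS, Hy.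
  - intros Hx; rewrite (proj2 (Hf x Hx)); lia.
Qed.

Lemma Gequiv_displacement x y : Gequiv m x y ->
  (S x <-> S y) /\ (S x -> Z.abs (f x - x) = Z.abs (f y - y)).
Proof.
  induction 1 as [x y Hg | x | x y _ [E D] | x y z _ [E1 D1] _ [E2 D2]].
  - apply Ggen_displacement, Hg.
  - tauto.
  - split; [tauto|]; intros Hy; symmetry; apply D, E, Hy.
  - split; [tauto|]; intros Hx; rewrite (D1 Hx); apply D2, E1, Hx.
Qed.

End Displacement.

(* A lifted partial permutation moves points by a bounded amount: the
   displacement only depends on the orbit, and there are finitely many. *)
Lemma lifted_pp_bounded_displacement m k S f : lifted_pp m k S f ->
  exists K, 0 <= K /\ forall s, S s -> Z.abs (f s - s) <= K.
Proof.
  intros [HS [[l [_ [_ [_ [_ Hcover]]]]] [Hf _]]].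
  destruct (list_bound (fun r => Z.abs (f r - r)) l) as [K [HK0 HK]].
  exists K; split; auto; intros s Hs.
  destruct (Hcover s Hs) as [r [Hr Hsr]].
  rewrite (proj2 (Gequiv_displacement m S f HS Hf s r Hsr) Hs); auto.
Qed.

(* If f moves points by at most K < R, the crossings at i lie in the window
   [i-R, i+R) and are the graph points in two R x R squares: the upper-left
   one (i-R <= s <= i-1, i <= f s < i+R) and the lower-right one. *)
Lemma crossings_as_boxes (S : Z -> Prop) f i K (R : nat) :
  (forall s, S s -> Z.abs (f s - s) <= K) -> K < Z.of_nat R ->
  exists n, card_is (crossing S f i) n /\
    Z.of_nat n =
      boxsum (fun p q => ind (graph S f p q)) (i - 1 - Z.of_nat R) R (i - 1) R +
      boxsum (fun p q => ind (graph S f p q)) (i - 1) R (i - 1 - Z.of_nat R) R.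
Proof.
  intros HK HR.
  destruct (count_in_window (crossing S f i) (i - Z.of_nat R) (R + R))
    as [l [Hnd [Hlen Hin]]].
  exists (length l); split.
  - exists l; split; [exact Hnd | split; [reflexivity |]].
    intros s; rewrite Hin; split; [tauto |]; intros Hc; split; auto.
    destruct Hc as [Hs [[? ?]|[? ?]]]; specialize (HK s Hs); lia.
  - rewrite Hlen, !boxsum_graph, sumN_split; f_equal;
      apply sumN_ext; try lia; intros x Hx; apply ind_iff; unfold crossing;
      (split; [intros [Hs Hc] | intros [Hs Hc]]); specialize (HK x Hs);
      split; auto; lia.
Qed.

(* For a domain phi supported in the band |a - b| <= M < R, the two R x R
   quadrant squares at the diagonal square (c,c) have only one non-vanishing
   corner, namely (c,c) itself. *)
Lemma in_D_quadrants m S f T g phi M c (R : nat) :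
  in_D m S f T g phi ->
  (forall a b, M < Z.abs (a - b) -> phi (a, b) = 0) -> M < Z.of_nat R ->
  let box F a0 b0 := boxsum (fun p q => ind (F p q)) a0 R b0 R in
  (box (graph S f) (c - Z.of_nat R) c + box (graph S f) c (c - Z.of_nat R)) -
  (box (graph T g) (c - Z.of_nat R) c + box (graph T g) c (c - Z.of_nat R)) =
  2 * phi (c, c).
Proof.
  intros HD HM HR box; unfold box.
  pose proof (in_D_boxsum _ _ _ _ _ _ HD (c - Z.of_nat R) R c R) as Eupper.
  pose proof (in_D_boxsum _ _ _ _ _ _ HD c R (c - Z.of_nat R) R) as Elower.
  replace (c - Z.of_nat R + Z.of_nat R) with c in * by lia.
  rewrite (HM c), (HM (c - Z.of_nat R)), (HM (c - Z.of_nat R) c) in Eupper by lia.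
  rewrite (HM (c + Z.of_nat R)), (HM (c + Z.of_nat R)), (HM c (c - Z.of_nat R))
    in Elower by lia.
  lia.
Qed.

Section DiagonalPeriodicity.
Variables (m : Z) (phi : Z * Z -> Z).
Hypothesis Hrot : forall sq, phi (rot1 sq) = phi sq /\ phi (rot2 m sq) = phi sq.

(* The composite of the two rotations is the translation by (2m-2, 2m-2). *)
Lemma rotation_invariant_translation a b :
  phi (a + (2 * m - 2), b + (2 * m - 2)) = phi (a, b).
Proof.
  replace (a + (2 * m - 2), b + (2 * m - 2)) with (rot2 m (rot1 (a, b)))
    by (unfold rot1, rot2; simpl; f_equal; lia).
  rewrite (proj2 (Hrot _)), (proj1 (Hrot _)); reflexivity.
Qed.

Lemma rotation_invariant_translations t : forall a b,
  phi (a + t * (2 * m - 2), b + t * (2 * m - 2)) = phi (a, b).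
Proof.
  induction t as [|t IH|t IH] using Z.peano_ind; intros a b.
  - rewrite !Z.mul_0_l, !Z.add_0_r; reflexivity.
  - rewrite <- (IH a b), <- (rotation_invariant_translation
      (a + t * (2 * m - 2)) (b + t * (2 * m - 2))).
    f_equal; f_equal; lia.
  - rewrite <- (IH a b), <- (rotation_invariant_translation
      (a + Z.pred t * (2 * m - 2)) (b + Z.pred t * (2 * m - 2))).
    f_equal; f_equal; lia.
Qed.

Lemma diagonal_label_invariance i j :
  Q2rel m (j + 1) i -> phi (j, j) = phi (i - 1, i - 1).
Proof.
  intros [_ [Hmod | Hmod]].
  - pose proof (Z_div_mod_eq_full (i - (j + 1)) (2 * m - 2)) as E.
    rewrite Hmod in E.
    rewrite <- (rotation_invariant_translations
                  (- ((i - (j + 1)) / (2 * m - 2))) (i - 1) (i - 1)).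
    f_equal; f_equal; lia.
  - pose proof (Z_div_mod_eq_full (i - (2 - (j + 1))) (2 * m - 2)) as E.
    rewrite Hmod in E.
    rewrite <- (proj1 (Hrot (i - 1, i - 1))); unfold rot1; simpl.
    rewrite <- (rotation_invariant_translations
                  ((i - (2 - (j + 1))) / (2 * m - 2)) (- (i - 1)) (- (i - 1))).
    f_equal; f_equal; lia.
Qed.

End DiagonalPeriodicity.

Theorem mainTheorem5 (m k : Z) (S : Z -> Prop) (f : Z -> Z)
    (T : Z -> Prop) (g : Z -> Z) (phi : Z * Z -> Z) :
  0 < k -> k < m ->
  lifted_pp m k S f -> lifted_pp m k T g ->
  in_D m S f T g phi ->
  forall i, 1 <= i <= m ->
    exists nf ng : nat,
      card_is (crossing S f i) nf /\ card_is (crossing T g i) ng /\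
      forall j, Q2rel m (j + 1) i ->
        2 * phi (j, j) = Z.of_nat nf - Z.of_nat ng.
Proof.
  intros _ _ Hf Hg HD i _.
  destruct (two_chain_band m phi (proj1 HD)) as [M [HM0 HM]].
  destruct (lifted_pp_bounded_displacement _ _ _ _ Hf) as [Kf [HKf0 HKf]].
  destruct (lifted_pp_bounded_displacement _ _ _ _ Hg) as [Kg [HKg0 HKg]].
  (* one window size R dominating the band width and both displacements *)
  set (R := Z.to_nat (1 + M + Kf + Kg)).
  assert (HR : Z.of_nat R = 1 + M + Kf + Kg) by (unfold R; lia).
  destruct (crossings_as_boxes S f i Kf R HKf ltac:(lia)) as [nf [Hnf Enf]].
  destruct (crossings_as_boxes T g i Kg R HKg ltac:(lia)) as [ng [Hng Eng]].
  exists nf, ng; split; [exact Hnf | split; [exact Hng |]].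
  intros j Hj.
  rewrite (diagonal_label_invariance m phi (proj1 (proj1 HD)) i j Hj).
  pose proof (in_D_quadrants m S f T g phi M (i - 1) R HD HM ltac:(lia)) as Equad.
  cbv beta zeta in Equad; lia.
Qed.
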